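(* Let $\mathcal F=\{f_0,f_1,\ldots\}$ be a (countable) family of bounded arithmetic functions with $\mathrm{AE}(\mathcal F)<+\infty$. Then for every $\epsilon>0$ there exists $\delta>0$ such that for every family $\mathcal G=\{g_0,g_1,\ldots\}\subseteq l^\infty(\mathbb N)$ (indexed by the same index set) with $\sup_{i}\|g_i-f_i\|_{l^\infty}<\delta$, one has $\mathrm{AE}(\mathcal G)>\mathrm{AE}(\mathcal F)-\epsilon$.
   Context: $\mathbb N=\{0,1,2,\ldots\}$ and $l^\infty(\mathbb N)$ is the C*-algebra of bounded complex-valued functions on $\mathbb N$ with the sup norm. Let $\sigma_A:l^\infty(\mathbb N)\to l^\infty(\mathbb N)$ be $(\sigma_Af)(n)=f(n+1)$. An anqie is a unital C*-subalgebra $\mathcal A\subseteq l^\infty(\mathbb N)$ with $\sigma_A(\mathcal A)\subseteq\mathcal A$. For $\mathcal F\subseteq l^\infty(\mathbb N)$, $\mathcal A_{\mathcal F}$ denotes the smallest anqie containing $\mathcal F$. For an anqie $\mathcal A$ with maximal ideal space $X$ (weak* topology), the map $A:X\to X$, $(A\rho)(f)=\rho(\sigma_Af)$, is continuous; the anqie entropy $\mathrm{AE}(\mathcal A)\in[0,\infty]$ is the topological entropy $h(A)$, and $\mathrm{AE}(\mathcal F)=\mathrm{AE}(\mathcal A_{\mathcal F})$. *)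

From Stdlib Require Import Reals List.
Open Scope R_scope.

Record C := mkC { Re : R ; Im : R }.
Definition C0 : C := mkC 0 0.
Definition C1 : C := mkC 1 0.
Definition Cadd (z w : C) : C := mkC (Re z + Re w) (Im z + Im w).
Definition Csub (z w : C) : C := mkC (Re z - Re w) (Im z - Im w).
Definition Cmul (z w : C) : C :=
  mkC (Re z * Re w - Im z * Im w) (Re z * Im w + Im z * Re w).
Definition Cconj (z : C) : C := mkC (Re z) (- Im z).
Definition Cmod (z : C) : R := sqrt (Re z * Re z + Im z * Im z).

Definition arith := nat -> C.
Definition linf_bounded (f : arith) : Prop := exists M : R, forall n, Cmod (f n) <= M.
Definition shift (f : arith) : arith := fun n => f (S n).
Fixpoint shiftn (j : nat) (f : arith) : arith :=
  match j with O => f | S k => shift (shiftn k f) end.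

(** * Anqies: unital (norm-closed) C*-subalgebras of l^infty(N) stable under shift.
    A subset of l^infty(N) is represented by a predicate on arith. *)
Definition is_anqie (A : arith -> Prop) : Prop :=
  (forall f, A f -> linf_bounded f) /\
  A (fun _ => C1) /\
  (forall f g, A f -> A g -> A (fun n => Cadd (f n) (g n))) /\
  (forall (c : C) f, A f -> A (fun n => Cmul c (f n))) /\
  (forall f g, A f -> A g -> A (fun n => Cmul (f n) (g n))) /\
  (forall f, A f -> A (fun n => Cconj (f n))) /\
  (forall f, linf_bounded f ->
     (forall eps, eps > 0 -> exists g, A g /\ forall n, Cmod (Csub (f n) (g n)) <= eps) ->
     A f) /\
  (forall f, A f -> A (shift f)).

Definition gen_anqie (F : nat -> arith) : arith -> Prop :=
  fun f => forall A, is_anqie A -> (forall i, A (F i)) -> A f.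

(** A character is represented by a function on all of arith, only its values on A
    matter (all notions below only depend on these values). *)
Definition is_char (A : arith -> Prop) (rho : arith -> C) : Prop :=
  rho (fun _ => C1) = C1 /\
  (forall f g, A f -> A g -> rho (fun n => Cadd (f n) (g n)) = Cadd (rho f) (rho g)) /\
  (forall c f, A f -> rho (fun n => Cmul c (f n)) = Cmul c (rho f)) /\
  (forall f g, A f -> A g -> rho (fun n => Cmul (f n) (g n)) = Cmul (rho f) (rho g)).

Definition wopen (A : arith -> Prop) (U : (arith -> C) -> Prop) : Prop :=
  forall rho, is_char A rho -> U rho ->
    exists (l : list arith) (eps : R), eps > 0 /\ (forall f, In f l -> A f) /\
      forall rho', is_char A rho' ->
        (forall f, In f l -> Cmod (Csub (rho' f) (rho f)) < eps) -> U rho'.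

Definition open_cover (A : arith -> Prop) (Us : list ((arith -> C) -> Prop)) : Prop :=
  (forall U, In U Us -> wopen A U) /\
  (forall rho, is_char A rho -> exists U, In U Us /\ U rho).

Definition Amap_iter (j : nat) (rho : arith -> C) : arith -> C :=
  fun f => rho (shiftn j f).

(** The element of the join cover U v A^{-1}U v ... v A^{-(n-1)}U indexed by the word w *)
Definition word_set (Us : list ((arith -> C) -> Prop)) (n : nat) (w : list nat)
  (rho : arith -> C) : Prop :=
  forall j, (j < n)%nat -> nth (nth j w 0%nat) Us (fun _ => False) (Amap_iter j rho).

Definition covers_with (A : arith -> Prop) (Us : list ((arith -> C) -> Prop))
  (n k : nat) : Prop :=
  exists ws : list (list nat), length ws = k /\
    forall rho, is_char A rho -> exists w, In w ws /\ word_set Us n w rho.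

Definition is_covnum (A : arith -> Prop) (Us : list ((arith -> C) -> Prop))
  (n N : nat) : Prop :=
  covers_with A Us n N /\ forall k, covers_with A Us n k -> (N <= k)%nat.

Definition cover_entropy (A : arith -> Prop) (Us : list ((arith -> C) -> Prop))
  (h : R) : Prop :=
  exists N : nat -> nat, (forall n, is_covnum A Us n (N n)) /\
    Un_cv (fun n => ln (INR (N (S n))) / INR (S n)) h.

Inductive ER := ERfin (r : R) | ERinf.
Definition ER_le (x y : ER) : Prop :=
  match x, y with
  | _, ERinf => True
  | ERinf, ERfin _ => False
  | ERfin a, ERfin b => a <= b
  end.
Definition ER_lt (x y : ER) : Prop :=
  match x, y with
  | ERfin _, ERinf => True
  | ERinf, _ => False
  | ERfin a, ERfin b => a < b
  end.

Definition is_AE (A : arith -> Prop) (e : ER) : Prop :=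
  (forall Us h, open_cover A Us -> cover_entropy A Us h -> ER_le (ERfin h) e) /\
  (forall b : R,
     (forall Us h, open_cover A Us -> cover_entropy A Us h -> h <= b) ->
     ER_le e (ERfin b)).

(* Let X_F be the maximal ideal space of A_F. Every element of A_F is a uniformly continuous
   function of the coordinates rho (sigma^j f_i), and X_F is sequentially compact, so a finite
   open cover V of X_F has a Lebesgue number: characters that are s-close on the coordinates
   with i, j <= K lie in a common member of V. The evaluations f |-> f(n) are dense in X_F and
   A maps evaluation at n to evaluation at n + 1, so membership in the words of join covers
   is governed by windows of the sequences f_i.
   If sup_i |g_i - f_i| < s/4, take a grid cover U of X_G in the coordinates rho (g_i), i <= K,
   of mesh s/4. Two evaluations in the same (n+K)-word of U have windows of f_0..f_K of length
   n+K that differ by less than 3s/4, so each (n+K)-word of U lies in an n-word of V. Hence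
   N(V, n) <= N(U, n+K), so h(A_F, V) <= h(A_G, U) <= AE(G); choosing V with
   h(A_F, V) > AE(F) - eps/2 gives the theorem. *)

From Pilot Require Import Defs.
From Stdlib Require Import Reals List Lra Lia Psatz Classical ClassicalEpsilon
  FunctionalExtensionality Rtopology Cantor ZArith Wf_nat.
Import Defs.
Open Scope R_scope.

Lemma C_ext (z w : C) : Re z = Re w -> Im z = Im w -> z = w.
Proof. destruct z, w; simpl; intros; subst; reflexivity. Qed.

Lemma Rle_of_sqr_le (a b : R) : 0 <= a -> 0 <= b -> a * a <= b * b -> a <= b.
Proof. intros; nra. Qed.

Lemma Cmod_ge0 (z : C) : 0 <= Cmod z.
Proof. apply sqrt_pos. Qed.

Lemma Cmod_sqr (z : C) : Cmod z * Cmod z = Re z * Re z + Im z * Im z.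
Proof. unfold Cmod; apply sqrt_sqrt; nra. Qed.

Lemma Rabs_Re_le_Cmod (z : C) : Rabs (Re z) <= Cmod z.
Proof.
  apply Rle_of_sqr_le; [apply Rabs_pos | apply Cmod_ge0 |].
  rewrite Cmod_sqr, <- Rabs_mult, Rabs_right; nra.
Qed.

Lemma Rabs_Im_le_Cmod (z : C) : Rabs (Im z) <= Cmod z.
Proof.
  apply Rle_of_sqr_le; [apply Rabs_pos | apply Cmod_ge0 |].
  rewrite Cmod_sqr, <- Rabs_mult, Rabs_right; nra.
Qed.

Lemma Cmod_le_Rabs_Re_Im (z : C) : Cmod z <= Rabs (Re z) + Rabs (Im z).
Proof.
  pose proof (Rabs_pos (Re z)); pose proof (Rabs_pos (Im z)).
  apply Rle_of_sqr_le; [apply Cmod_ge0 | lra |].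
  rewrite Cmod_sqr, <- (Rabs_right (Re z * Re z)), <- (Rabs_right (Im z * Im z)), !Rabs_mult by nra.
  nra.
Qed.

Lemma Cmod_real (r : R) : Cmod (mkC r 0) = Rabs r.
Proof.
  apply Rle_antisym; [| apply (Rabs_Re_le_Cmod (mkC r 0))].
  pose proof (Cmod_le_Rabs_Re_Im (mkC r 0)); simpl in *; rewrite Rabs_R0 in *; lra.
Qed.

Lemma Cmod_mul (z w : C) : Cmod (Cmul z w) = Cmod z * Cmod w.
Proof. unfold Cmod, Cmul; simpl; rewrite <- sqrt_mult by nra; f_equal; ring. Qed.

Lemma Cmod_conj (z : C) : Cmod (Cconj z) = Cmod z.
Proof. unfold Cmod, Cconj; simpl; f_equal; ring. Qed.

Lemma Cmod_C0 : Cmod C0 = 0.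
Proof. unfold Cmod; simpl; replace (0 * 0 + 0 * 0) with 0 by ring; apply sqrt_0. Qed.

Lemma Cmod_C1 : Cmod C1 = 1.
Proof. unfold Cmod; simpl; replace (1 * 1 + 0 * 0) with 1 by ring; apply sqrt_1. Qed.

Lemma Cmod_eq0 (z : C) : Cmod z = 0 -> z = C0.
Proof. intros H; pose proof (Cmod_sqr z) as E; rewrite H in E; apply C_ext; simpl; nra. Qed.

Lemma Cmod_add_le (z w : C) : Cmod (Cadd z w) <= Cmod z + Cmod w.
Proof.
  pose proof (Cmod_sqr z); pose proof (Cmod_sqr w); pose proof (Cmod_sqr (Cadd z w)).
  pose proof (Cmod_ge0 z); pose proof (Cmod_ge0 w).
  apply Rle_of_sqr_le; [apply Cmod_ge0 | lra |].
  destruct z as [a b], w as [c d]; simpl in *.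
  (* Cauchy-Schwarz, via Lagrange's identity *)
  assert (a * c + b * d <= Cmod (mkC a b) * Cmod (mkC c d)).
  { destruct (Rle_dec (a * c + b * d) 0); [nra |].
    apply Rle_of_sqr_le; [lra | nra |].
    pose proof (Rle_0_sqr (a * d - b * c)); unfold Rsqr in *; nra. }
  nra.
Qed.

Lemma Csub_C0 (z : C) : Csub z C0 = z.
Proof. apply C_ext; simpl; ring. Qed.

Lemma Cmod_Csub_sym (z w : C) : Cmod (Csub z w) = Cmod (Csub w z).
Proof. unfold Cmod, Csub; simpl; f_equal; ring. Qed.

Lemma Cmod_sub_triangle (a b c : C) : Cmod (Csub a c) <= Cmod (Csub a b) + Cmod (Csub b c).
Proof.
  replace (Csub a c) with (Cadd (Csub a b) (Csub b c)) by (apply C_ext; simpl; ring).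
  apply Cmod_add_le.
Qed.

Lemma Cmod_sub_Cadd (a b c d : C) :
  Cmod (Csub (Cadd a b) (Cadd c d)) <= Cmod (Csub a c) + Cmod (Csub b d).
Proof.
  replace (Csub (Cadd a b) (Cadd c d)) with (Cadd (Csub a c) (Csub b d))
    by (apply C_ext; simpl; ring).
  apply Cmod_add_le.
Qed.

Lemma Cmod_sub_Cmul (a b c d : C) :
  Cmod (Csub (Cmul a b) (Cmul c d)) <= Cmod a * Cmod (Csub b d) + Cmod d * Cmod (Csub a c).
Proof.
  replace (Csub (Cmul a b) (Cmul c d)) with (Cadd (Cmul a (Csub b d)) (Cmul d (Csub a c)))
    by (apply C_ext; simpl; ring).
  rewrite <- !Cmod_mul; apply Cmod_add_le.
Qed.

Lemma C0_neq_C1 : C0 <> C1.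
Proof. intros H; assert (Re C0 = Re C1) by now rewrite H. simpl in *; lra. Qed.

Lemma Cmul_comm (z w : C) : Cmul z w = Cmul w z.
Proof. apply C_ext; simpl; ring. Qed.

Definition Cinv (z : C) : C :=
  mkC (Re z / (Re z * Re z + Im z * Im z)) (- Im z / (Re z * Re z + Im z * Im z)).

Lemma Cmul_Cinv_r (z : C) : z <> C0 -> Cmul z (Cinv z) = C1.
Proof.
  intros Hz; assert (Re z * Re z + Im z * Im z <> 0).
  { intros H; apply Hz, C_ext; simpl; nra. }
  apply C_ext; simpl; field; auto.
Qed.

Lemma Cmod_Cinv_mul (z : C) : z <> C0 -> Cmod (Cinv z) * Cmod z = 1.
Proof. intros; rewrite <- Cmod_mul, Cmul_comm, Cmul_Cinv_r; auto using Cmod_C1. Qed.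

(** * Anqies and their characters *)

Section Anqie.
Context {A : arith -> Prop} (HA : is_anqie A).

Lemma anqie_bounded f : A f -> linf_bounded f.
Proof. now destruct HA as (?&?&?&?&?&?&?&?); auto. Qed.
Lemma anqie_one : A (fun _ => C1).
Proof. now destruct HA as (?&?&?&?&?&?&?&?). Qed.
Lemma anqie_add f g : A f -> A g -> A (fun n => Cadd (f n) (g n)).
Proof. now destruct HA as (?&?&?&?&?&?&?&?); auto. Qed.
Lemma anqie_scal c f : A f -> A (fun n => Cmul c (f n)).
Proof. now destruct HA as (?&?&?&?&?&?&?&?); auto. Qed.
Lemma anqie_mul f g : A f -> A g -> A (fun n => Cmul (f n) (g n)).
Proof. now destruct HA as (?&?&?&?&?&?&?&?); auto. Qed.
Lemma anqie_conj f : A f -> A (fun n => Cconj (f n)).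
Proof. now destruct HA as (?&?&?&?&?&?&?&?); auto. Qed.
Lemma anqie_closed f : linf_bounded f ->
  (forall eps, eps > 0 -> exists g, A g /\ forall n, Cmod (Csub (f n) (g n)) <= eps) -> A f.
Proof. now destruct HA as (?&?&?&?&?&?&?&?); auto. Qed.
Lemma anqie_shift f : A f -> A (shift f).
Proof. now destruct HA as (?&?&?&?&?&?&?&?); auto. Qed.

Lemma anqie_ext f g : A f -> (forall n, f n = g n) -> A g.
Proof. intros Hf E; replace g with f; auto; now apply functional_extensionality. Qed.

Lemma anqie_const c : A (fun _ => c).
Proof.
  apply anqie_ext with (fun n => Cmul c C1); [apply anqie_scal, anqie_one |].
  intros; apply C_ext; simpl; ring.
Qed.

Lemma anqie_sub f g : A f -> A g -> A (fun n => Csub (f n) (g n)).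
Proof.
  intros; apply anqie_ext with (fun n => Cadd (f n) (Cmul (mkC (-1) 0) (g n))).
  - now apply anqie_add, anqie_scal.
  - intros; apply C_ext; simpl; ring.
Qed.

Lemma anqie_shiftn j f : A f -> A (shiftn j f).
Proof. induction j; simpl; auto using anqie_shift. Qed.

End Anqie.

Ltac anqie_closure HA :=
  repeat first
    [ assumption | apply (anqie_const HA) | apply (anqie_sub HA) | apply (anqie_add HA)
    | apply (anqie_mul HA) | apply (anqie_conj HA) | apply (anqie_shiftn HA) ].

Section Char.
Context {A : arith -> Prop} (HA : is_anqie A).
Context {rho : arith -> C} (Hrho : is_char A rho).

Lemma char_one : rho (fun _ => C1) = C1.
Proof. now destruct Hrho. Qed.
Lemma char_add f g : A f -> A g -> rho (fun n => Cadd (f n) (g n)) = Cadd (rho f) (rho g).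
Proof. now destruct Hrho as (?&?&?&?); auto. Qed.
Lemma char_scal c f : A f -> rho (fun n => Cmul c (f n)) = Cmul c (rho f).
Proof. now destruct Hrho as (?&?&?&?); auto. Qed.
Lemma char_mul f g : A f -> A g -> rho (fun n => Cmul (f n) (g n)) = Cmul (rho f) (rho g).
Proof. now destruct Hrho as (?&?&?&?); auto. Qed.

Lemma char_ext f g : (forall n, f n = g n) -> rho f = rho g.
Proof. intros; f_equal; now apply functional_extensionality. Qed.

Lemma char_const c : rho (fun _ => c) = c.
Proof.
  rewrite (char_ext _ (fun n => Cmul c C1)) by (intros; apply C_ext; simpl; ring).
  rewrite char_scal, char_one by apply (anqie_one HA); apply C_ext; simpl; ring.
Qed.

Lemma char_sub f g : A f -> A g -> rho (fun n => Csub (f n) (g n)) = Csub (rho f) (rho g).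
Proof.
  intros; rewrite (char_ext _ (fun n => Cadd (f n) (Cmul (mkC (-1) 0) (g n))))
    by (intros; apply C_ext; simpl; ring).
  rewrite char_add, char_scal by anqie_closure HA; apply C_ext; simpl; ring.
Qed.

Lemma char_shift : is_char A (fun f => rho (shift f)).
Proof.
  destruct Hrho as (H1 & H2 & H3 & H4).
  repeat split.
  - exact H1.
  - intros f g Hf Hg; exact (H2 _ _ (anqie_shift HA f Hf) (anqie_shift HA g Hg)).
  - intros c f Hf; exact (H3 c _ (anqie_shift HA f Hf)).
  - intros f g Hf Hg; exact (H4 _ _ (anqie_shift HA f Hf) (anqie_shift HA g Hg)).
Qed.

End Char.

Lemma shiftn_add m p f : shiftn m (shiftn p f) = shiftn (m + p) f.
Proof. induction m; simpl; congruence. Qed.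

Lemma shiftn_apply j f n : shiftn j f n = f (j + n)%nat.
Proof. revert n; induction j; intros; simpl; unfold shift; rewrite ?IHj; f_equal; lia. Qed.

Lemma char_Amap_iter A j rho : is_anqie A -> is_char A rho -> is_char A (Amap_iter j rho).
Proof.
  revert rho; induction j; intros rho HA Hr; [exact Hr |].
  apply (IHj (fun f => rho (shift f))); auto using char_shift.
Qed.

Lemma Amap_iter_add m p rho : Amap_iter p (Amap_iter m rho) = Amap_iter (m + p) rho.
Proof. unfold Amap_iter; apply functional_extensionality; intro f; now rewrite shiftn_add. Qed.

Definition ev (m : nat) : arith -> C := fun f => f m.

Lemma ev_char A m : is_char A (ev m).
Proof. repeat split. Qed.

Lemma Amap_iter_ev j m : Amap_iter j (ev m) = ev (j + m).
Proof. apply functional_extensionality; intro f; apply shiftn_apply. Qed.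

Lemma linf_bounded_anqie : is_anqie linf_bounded.
Proof.
  repeat split; auto.
  - exists 1; intros; rewrite Cmod_C1; lra.
  - intros f g [M1 H1] [M2 H2]; exists (M1 + M2); intros n.
    specialize (H1 n); specialize (H2 n); pose proof (Cmod_add_le (f n) (g n)); lra.
  - intros c f [M H]; exists (Cmod c * M); intros; rewrite Cmod_mul.
    apply Rmult_le_compat_l; auto using Cmod_ge0.
  - intros f g [M1 H1] [M2 H2]; exists (M1 * M2); intros; rewrite Cmod_mul.
    apply Rmult_le_compat; auto using Cmod_ge0.
  - intros f [M H]; exists M; intros; now rewrite Cmod_conj.
  - intros f [M H]; exists M; intros; apply H.
Qed.

Lemma gen_anqie_is_anqie F : (forall i, linf_bounded (F i)) -> is_anqie (gen_anqie F).
Proof.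
  intros HF; unfold gen_anqie; repeat split.
  - intros f H; apply H; auto using linf_bounded_anqie.
  - intros A HA _; exact (anqie_one HA).
  - intros f g Hf Hg A HA HFA; apply (anqie_add HA); [apply Hf | apply Hg]; auto.
  - intros c f Hf A HA HFA; apply (anqie_scal HA); apply Hf; auto.
  - intros f g Hf Hg A HA HFA; apply (anqie_mul HA); [apply Hf | apply Hg]; auto.
  - intros f Hf A HA HFA; apply (anqie_conj HA); apply Hf; auto.
  - intros f Hb Hap A HA HFA; apply (anqie_closed HA); auto.
    intros eps He; destruct (Hap eps He) as [g [Hg Hd]]; exists g; split; auto; apply Hg; auto.
  - intros f Hf A HA HFA; apply (anqie_shift HA); apply Hf; auto.
Qed.

Lemma gen_anqie_gen F i : gen_anqie F (F i).
Proof. intros A _ H; apply H. Qed.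

Section Characters.
Context {A : arith -> Prop} (HA : is_anqie A).

Lemma anqie_Neumann_approx u v q B : A u -> 0 <= q ->
  (forall n, Cmod (Csub C1 (u n)) <= q) -> (forall n, Cmul (u n) (v n) = C1) ->
  (forall n, Cmod (v n) <= B) ->
  forall K, exists S, A S /\ forall n, Cmod (Csub (v n) (S n)) <= q ^ K * B.
Proof.
  intros Hu Hq Hd Huv Hvb; induction K as [| K [S [HS HSb]]].
  - exists (fun _ => C0); split; [apply (anqie_const HA) |].
    intros n; rewrite Csub_C0, Rmult_1_l; auto.
  - (* S' = 1 + (1 - u) S, the next partial sum of the Neumann series of 1/u *)
    exists (fun n => Cadd C1 (Cmul (Csub C1 (u n)) (S n))); split.
    + anqie_closure HA.
    + intros n; replace (Csub (v n) (Cadd C1 (Cmul (Csub C1 (u n)) (S n))))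
        with (Cmul (Csub C1 (u n)) (Csub (v n) (S n))).
      * rewrite Cmod_mul; simpl; rewrite Rmult_assoc.
        apply Rmult_le_compat; auto using Cmod_ge0.
      * specialize (Huv n); destruct (u n) as [a b], (v n) as [c d], (S n) as [e f].
        injection Huv; intros; apply C_ext; simpl; nra.
Qed.

Lemma anqie_inv_near_one u q : A u -> 0 <= q < 1 ->
  (forall n, Cmod (Csub C1 (u n)) <= q) ->
  exists v, A v /\ forall n, Cmul (u n) (v n) = C1.
Proof.
  intros Hu Hq Hd.
  assert (Hlow : forall n, 1 - q <= Cmod (u n)).
  { intros n; pose proof (Cmod_sub_triangle C1 (u n) C0) as H.
    rewrite !Csub_C0, Cmod_C1 in H; specialize (Hd n); lra. }
  assert (Hnz : forall n, u n <> C0).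
  { intros n E; specialize (Hlow n); rewrite E, Cmod_C0 in Hlow; lra. }
  set (v := fun n => Cinv (u n)); set (B := / (1 - q)).
  assert (HB : 0 < B) by (apply Rinv_0_lt_compat; lra).
  assert (Huv : forall n, Cmul (u n) (v n) = C1) by (intros n; apply Cmul_Cinv_r; auto).
  assert (Hvb : forall n, Cmod (v n) <= B).
  { intros n; pose proof (Cmod_Cinv_mul (u n) (Hnz n)); specialize (Hlow n).
    pose proof (Cmod_ge0 (v n)); unfold B.
    apply Rmult_le_reg_r with (1 - q); [lra |]; rewrite Rinv_l by lra; unfold v in *; nra. }
  exists v; split; auto.
  apply (anqie_closed HA); [exists B; auto |].
  intros eps He.
  destruct (pow_lt_1_zero q ltac:(rewrite Rabs_right; lra) (eps / B)) as [N HN].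
  { apply Rdiv_lt_0_compat; lra. }
  destruct (anqie_Neumann_approx u v q B Hu (proj1 Hq) Hd Huv Hvb N) as [S [HS HSb]].
  exists S; split; auto; intros n; eapply Rle_trans; [apply HSb |].
  specialize (HN N (le_n N)); rewrite Rabs_right in HN by (apply Rle_ge, pow_le; lra).
  apply Rmult_lt_compat_r with (r := B) in HN; auto.
  unfold Rdiv in HN; rewrite Rmult_assoc, Rinv_l, Rmult_1_r in HN; lra.
Qed.

Context {rho : arith -> C} (Hrho : is_char A rho).

Lemma char_invertible_neq0 u v : A u -> A v -> (forall n, Cmul (u n) (v n) = C1) -> rho u <> C0.
Proof.
  intros Hu Hv Huv E.
  assert (H1 : rho (fun n => Cmul (u n) (v n)) = rho (fun _ => C1)) by (apply char_ext; auto).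
  rewrite (char_mul Hrho), (char_one Hrho), E in H1 by auto.
  apply C0_neq_C1; rewrite <- H1; apply C_ext; simpl; ring.
Qed.

Lemma Cmod_char_le f M : A f -> (forall n, Cmod (f n) <= M) -> Cmod (rho f) <= M.
Proof.
  intros Hf HM; apply Rnot_lt_le; intros Hn.
  assert (HM0 : 0 <= M) by (pose proof (Cmod_ge0 (f 0%nat)); specialize (HM 0%nat); lra).
  set (l := rho f) in *.
  assert (Hl : l <> C0) by (intros E; rewrite E, Cmod_C0 in Hn; lra).
  pose proof (Cmod_Cinv_mul l Hl) as Hil.
  (* if |rho f| > sup |f|, then 1 - f / rho f is invertible, yet rho kills it *)
  set (u := fun n => Csub C1 (Cmul (Cinv l) (f n))).
  assert (HuA : A u) by (unfold u; anqie_closure HA).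
  destruct (anqie_inv_near_one u (M * Cmod (Cinv l)) HuA) as [v [HvA Hv]].
  - split; [apply Rmult_le_pos; auto using Cmod_ge0 |].
    apply Rmult_lt_reg_r with (Cmod l); [lra |]; rewrite Rmult_assoc, Hil; lra.
  - intros n; unfold u.
    replace (Csub C1 (Csub C1 (Cmul (Cinv l) (f n)))) with (Cmul (Cinv l) (f n))
      by (apply C_ext; simpl; ring).
    rewrite Cmod_mul, Rmult_comm; apply Rmult_le_compat_r; auto using Cmod_ge0.
  - apply (char_invertible_neq0 u v HuA HvA Hv); unfold u.
    rewrite (char_sub HA Hrho), (char_const HA Hrho), (char_scal Hrho)
      by anqie_closure HA.
    fold l; rewrite Cmul_comm, Cmul_Cinv_r by auto; apply C_ext; simpl; ring.
Qed.

Lemma char_real_valued h : A h -> (forall n, Im (h n) = 0) -> Im (rho h) = 0.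
Proof.
  intros Hh Him; destruct (anqie_bounded HA h Hh) as [M HM].
  destruct (Req_dec (Im (rho h)) 0) as [| Hy]; auto; exfalso.
  set (y := Im (rho h)) in *; set (x := Re (rho h)).
  (* a purely imaginary shift i t with 2 y t = M^2 + 1 violates the norm bound *)
  set (t := (M * M + 1) / (2 * y)).
  set (ht := fun n => Cadd (h n) (mkC 0 t)).
  assert (HtA : A ht) by (unfold ht; anqie_closure HA).
  set (Bt := sqrt (M * M + t * t)).
  assert (HBt : Bt * Bt = M * M + t * t) by (apply sqrt_sqrt; nra).
  assert (HB0 : 0 <= Bt) by apply sqrt_pos.
  assert (Hb : forall n, Cmod (ht n) <= Bt).
  { intros n; apply Rle_of_sqr_le; auto using Cmod_ge0.
    rewrite HBt, Cmod_sqr; unfold ht; simpl; rewrite Him.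
    specialize (HM n); pose proof (Cmod_sqr (h n)) as E; rewrite Him in E.
    pose proof (Cmod_ge0 (h n)); nra. }
  pose proof (Cmod_char_le ht Bt HtA Hb) as H.
  unfold ht in H; rewrite (char_add Hrho), (char_const HA Hrho) in H
    by anqie_closure HA.
  assert (H0 : Cmod (Cadd (rho h) (mkC 0 t)) * Cmod (Cadd (rho h) (mkC 0 t)) <= Bt * Bt)
    by (pose proof (Cmod_ge0 (Cadd (rho h) (mkC 0 t))); nra).
  rewrite Cmod_sqr, HBt in H0; simpl in H0; fold x y in H0.
  assert (2 * y * t = M * M + 1) by (unfold t; field; auto).
  nra.
Qed.

Lemma char_conj f : A f -> rho (fun n => Cconj (f n)) = Cconj (rho f).
Proof.
  intros Hf.
  set (u := fun n => Cmul (mkC (1/2) 0) (Cadd (f n) (Cconj (f n)))).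
  set (w := fun n => Cmul (mkC 0 (-1/2)) (Csub (f n) (Cconj (f n)))).
  assert (HuA : A u) by (unfold u; anqie_closure HA).
  assert (HwA : A w) by (unfold w; anqie_closure HA).
  assert (Hu : Im (rho u) = 0) by (apply char_real_valued; auto; intros n; unfold u; simpl; field).
  assert (Hw : Im (rho w) = 0) by (apply char_real_valued; auto; intros n; unfold w; simpl; field).
  rewrite (char_ext (rho := rho) f (fun n => Cadd (u n) (Cmul (mkC 0 1) (w n))))
    by (intros n; unfold u, w; apply C_ext; simpl; field).
  rewrite (char_ext (rho := rho) _ (fun n => Cadd (u n) (Cmul (mkC 0 (-1)) (w n))))
    by (intros n; unfold u, w; apply C_ext; simpl; field).
  rewrite !(char_add Hrho), !(char_scal Hrho) by anqie_closure HA.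
  destruct (rho u) as [a b], (rho w) as [c d]; simpl in *; subst; apply C_ext; simpl; ring.
Qed.

Definition dev_sqr (f : arith) (n : nat) : C :=
  Cmul (Csub (f n) (rho f)) (Cconj (Csub (f n) (rho f))).

Fixpoint dev_sqr_sum (l : list arith) (n : nat) : C :=
  match l with nil => C0 | f :: l' => Cadd (dev_sqr f n) (dev_sqr_sum l' n) end.

Lemma dev_sqr_real f n :
  dev_sqr f n = mkC (Cmod (Csub (f n) (rho f)) * Cmod (Csub (f n) (rho f))) 0.
Proof. unfold dev_sqr; rewrite Cmod_sqr; apply C_ext; simpl; ring. Qed.

Lemma dev_sqr_sum_spec l : (forall f, In f l -> A f) ->
  A (dev_sqr_sum l) /\ rho (dev_sqr_sum l) = C0 /\
  (exists Mt, forall n, Im (dev_sqr_sum l n) = 0 /\ 0 <= Re (dev_sqr_sum l n) <= Mt) /\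
  (forall n f, In f l ->
     Cmod (Csub (f n) (rho f)) * Cmod (Csub (f n) (rho f)) <= Re (dev_sqr_sum l n)).
Proof.
  induction l as [| f l IH]; intros Hl.
  - simpl; split; [apply (anqie_const HA) |].
    split; [apply (char_const HA Hrho) |].
    split; [exists 0; intros; simpl; lra | intros n f []].
  - destruct IH as (IA & IR & [Mt IM] & IL); [intros; apply Hl; simpl; auto |].
    assert (HfA : A f) by (apply Hl; simpl; auto).
    assert (HtA : A (dev_sqr f)) by (unfold dev_sqr; anqie_closure HA).
    destruct (anqie_bounded HA f HfA) as [Mf HMf].
    repeat split.
    + anqie_closure HA.
    + change (rho (fun n => Cadd (dev_sqr f n) (dev_sqr_sum l n)) = C0).
      rewrite (char_add Hrho), IR by auto; unfold dev_sqr.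
      rewrite (char_mul Hrho), (char_conj (fun n => Csub (f n) (rho f))),
        (char_sub HA Hrho), (char_const HA Hrho) by anqie_closure HA.
      apply C_ext; simpl; ring.
    + exists ((Mf + Cmod (rho f)) * (Mf + Cmod (rho f)) + Mt); intros n.
      destruct (IM n) as [I1 [I2 I3]]; cbn [dev_sqr_sum]; rewrite dev_sqr_real; cbn [Re Im Cadd].
      pose proof (Cmod_sub_triangle (f n) C0 (rho f)) as H.
      rewrite Csub_C0, (Cmod_Csub_sym C0), Csub_C0 in H.
      specialize (HMf n); pose proof (Cmod_ge0 (Csub (f n) (rho f))).
      repeat split; try lra; nra.
    + intros n g Hg; cbn [dev_sqr_sum]; rewrite dev_sqr_real; cbn [Re Im Cadd].
      destruct (IM n) as [I1 [I2 I3]].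
      destruct Hg as [<- | Hg]; [nra |].
      specialize (IL n g Hg); pose proof (Cmod_ge0 (Csub (f n) (rho f))); nra.
Qed.

Lemma ev_dense l s : (forall f, In f l -> A f) -> s > 0 ->
  exists m, forall f, In f l -> Cmod (Csub (f m) (rho f)) < s.
Proof.
  intros Hl Hs; apply NNPP; intros Hne.
  assert (Hbad : forall m, exists f, In f l /\ s <= Cmod (Csub (f m) (rho f))).
  { intros m; apply NNPP; intros H2; apply Hne; exists m; intros f Hf.
    apply Rnot_le_lt; intros H3; apply H2; eauto. }
  destruct (dev_sqr_sum_spec l Hl) as (GA & GR & [Mt GM] & GL).
  assert (HGL : forall n, s * s <= Re (dev_sqr_sum l n)).
  { intros n; destruct (Hbad n) as [f [Hf Hfs]]; specialize (GL n f Hf); nra. }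
  assert (HMt : s * s <= Mt) by (specialize (HGL 0%nat); destruct (GM 0%nat); lra).
  assert (Hs2 : 0 < s * s) by nra.
  assert (Hss : 0 < s * s / Mt <= 1).
  { split; [apply Rdiv_lt_0_compat; lra |].
    apply Rmult_le_reg_r with Mt; [lra |]; unfold Rdiv; rewrite Rmult_assoc, Rinv_l; lra. }
  (* the normalized sum u of squared deviations is bounded below, hence invertible, but rho u = 0 *)
  set (u := fun n => Cmul (mkC (/ Mt) 0) (dev_sqr_sum l n)).
  assert (HuA : A u) by (unfold u; anqie_closure HA).
  destruct (anqie_inv_near_one u (1 - s * s / Mt) HuA) as [v [HvA Hv]]; [lra | |].
  - intros n; unfold u; destruct (GM n) as [I1 [I2 I3]]; specialize (HGL n).
    replace (Csub C1 (Cmul (mkC (/ Mt) 0) (dev_sqr_sum l n)))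
      with (mkC (1 - Re (dev_sqr_sum l n) / Mt) 0)
      by (apply C_ext; simpl; [field; lra | rewrite I1; ring]).
    assert (s * s / Mt <= Re (dev_sqr_sum l n) / Mt <= 1).
    { unfold Rdiv; split; [apply Rmult_le_compat_r; auto; left; apply Rinv_0_lt_compat; lra |].
      apply Rmult_le_reg_r with Mt; [lra |]; rewrite Rmult_assoc, Rinv_l; lra. }
    rewrite Cmod_real, Rabs_right; lra.
  - apply (char_invertible_neq0 u v HuA HvA Hv); unfold u.
    rewrite (char_scal Hrho), GR by auto; apply C_ext; simpl; ring.
Qed.

End Characters.

(** * Uniform continuity on the maximal ideal space *)

Definition chars_close (F : nat -> arith) (rho rho' : arith -> C) (K : nat) (s : R) : Prop :=
  forall i j, (i <= K)%nat -> (j <= K)%nat ->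
    Cmod (Csub (rho (shiftn j (F i))) (rho' (shiftn j (F i)))) < s.

Definition char_unif_cont (F : nat -> arith) (f : arith) : Prop :=
  forall eps, eps > 0 -> exists K s, s > 0 /\ forall rho rho',
    is_char (gen_anqie F) rho -> is_char (gen_anqie F) rho' ->
    chars_close F rho rho' K s -> Cmod (Csub (rho f) (rho' f)) < eps.

Lemma chars_close_mono F rho rho' K s K' s' : chars_close F rho rho' K s ->
  (K' <= K)%nat -> s <= s' -> chars_close F rho rho' K' s'.
Proof. intros H ? ? i j ? ?; eapply Rlt_le_trans; [apply H; lia | auto]. Qed.

Lemma char_unif_cont_both F f g eps : char_unif_cont F f -> char_unif_cont F g -> eps > 0 ->
  exists K s, s > 0 /\ forall rho rho',
    is_char (gen_anqie F) rho -> is_char (gen_anqie F) rho' -> chars_close F rho rho' K s ->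
    Cmod (Csub (rho f) (rho' f)) < eps /\ Cmod (Csub (rho g) (rho' g)) < eps.
Proof.
  intros Hf Hg He.
  destruct (Hf eps He) as [K1 [s1 [Hs1 H1]]], (Hg eps He) as [K2 [s2 [Hs2 H2]]].
  exists (Nat.max K1 K2), (Rmin s1 s2); split; [apply Rmin_glb_lt; auto |].
  intros rho rho' Hr Hr' Hc; split; [apply H1 | apply H2]; auto;
    (eapply chars_close_mono; [eauto | lia |]); [apply Rmin_l | apply Rmin_r].
Qed.

Section UniformContinuity.
Variable F : nat -> arith.
Hypothesis HF : forall i, linf_bounded (F i).
Let A := gen_anqie F.
Let HA : is_anqie A := gen_anqie_is_anqie F HF.

Lemma char_unif_cont_const c : char_unif_cont F (fun _ => c).
Proof.
  intros eps He; exists 0%nat, 1; split; [lra |]; intros rho rho' Hr Hr' _.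
  rewrite (char_const HA Hr), (char_const HA Hr').
  replace (Csub c c) with C0 by (apply C_ext; simpl; ring); rewrite Cmod_C0; lra.
Qed.

Lemma char_unif_cont_add f g : A f -> A g -> char_unif_cont F f -> char_unif_cont F g ->
  char_unif_cont F (fun n => Cadd (f n) (g n)).
Proof.
  intros Hf Hg Nf Ng eps He.
  destruct (char_unif_cont_both F f g (eps / 2) Nf Ng ltac:(lra)) as [K [s [Hs H]]].
  exists K, s; split; auto; intros rho rho' Hr Hr' Hc; destruct (H rho rho' Hr Hr' Hc) as [Ef Eg].
  rewrite (char_add Hr), (char_add Hr') by auto.
  eapply Rle_lt_trans; [apply Cmod_sub_Cadd | lra].
Qed.

Lemma char_unif_cont_mul f g : A f -> A g -> char_unif_cont F f -> char_unif_cont F g ->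
  char_unif_cont F (fun n => Cmul (f n) (g n)).
Proof.
  intros Hf Hg Nf Ng eps He.
  destruct (anqie_bounded HA f Hf) as [Mf HMf], (anqie_bounded HA g Hg) as [Mg HMg].
  pose proof (Cmod_ge0 (f 0%nat)) as Hf0; pose proof (Cmod_ge0 (g 0%nat)) as Hg0.
  specialize (HMf 0%nat) as HMf0; specialize (HMg 0%nat) as HMg0.
  set (e1 := eps / (Mf + Mg + 1)).
  assert (He1 : 0 < e1) by (apply Rdiv_lt_0_compat; lra).
  assert (He1' : (Mf + Mg) * e1 < eps).
  { assert (e1 * (Mf + Mg + 1) = eps) by (unfold e1; field; lra); nra. }
  destruct (char_unif_cont_both F f g e1 Nf Ng He1) as [K [s [Hs H]]].
  exists K, s; split; auto; intros rho rho' Hr Hr' Hc; destruct (H rho rho' Hr Hr' Hc) as [Ef Eg].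
  rewrite (char_mul Hr), (char_mul Hr') by auto.
  eapply Rle_lt_trans; [apply Cmod_sub_Cmul |].
  pose proof (Cmod_char_le HA Hr f Mf Hf HMf); pose proof (Cmod_char_le HA Hr' g Mg Hg HMg).
  pose proof (Cmod_ge0 (Csub (rho g) (rho' g))); pose proof (Cmod_ge0 (Csub (rho f) (rho' f))).
  nra.
Qed.

Lemma char_unif_cont_conj f : A f -> char_unif_cont F f ->
  char_unif_cont F (fun n => Cconj (f n)).
Proof.
  intros Hf Nf eps He; destruct (Nf eps He) as [K [s [Hs H]]].
  exists K, s; split; auto; intros rho rho' Hr Hr' Hc.
  rewrite (char_conj HA Hr f Hf), (char_conj HA Hr' f Hf).
  replace (Csub (Cconj (rho f)) (Cconj (rho' f))) with (Cconj (Csub (rho f) (rho' f)))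
    by (apply C_ext; simpl; ring).
  rewrite Cmod_conj; auto.
Qed.

Lemma char_unif_cont_shift f : A f -> char_unif_cont F f -> char_unif_cont F (shift f).
Proof.
  intros Hf Nf eps He; destruct (Nf eps He) as [K [s [Hs H]]].
  exists (S K), s; split; auto; intros rho rho' Hr Hr' Hc.
  apply (H (fun h => rho (shift h)) (fun h => rho' (shift h))); try apply char_shift; auto.
  intros i j Hi Hj; apply (Hc i (S j)); lia.
Qed.

Lemma char_unif_cont_closed f : A f ->
  (forall eps, eps > 0 -> exists g, (A g /\ char_unif_cont F g) /\
     forall n, Cmod (Csub (f n) (g n)) <= eps) ->
  char_unif_cont F f.
Proof.
  intros Hf Hap eps He.
  destruct (Hap (eps / 4)) as [g [[Hg Ng] Hd]]; [lra |].
  destruct (Ng (eps / 4)) as [K [s [Hs H]]]; [lra |].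
  exists K, s; split; auto; intros rho rho' Hr Hr' Hc.
  assert (Hfg : A (fun n => Csub (f n) (g n))) by anqie_closure HA.
  pose proof (Cmod_char_le HA Hr _ (eps / 4) Hfg Hd) as B1.
  pose proof (Cmod_char_le HA Hr' _ (eps / 4) Hfg Hd) as B2.
  rewrite (char_sub HA Hr) in B1 by auto; rewrite (char_sub HA Hr') in B2 by auto.
  specialize (H rho rho' Hr Hr' Hc).
  pose proof (Cmod_sub_triangle (rho f) (rho g) (rho' f)).
  pose proof (Cmod_sub_triangle (rho g) (rho' g) (rho' f)).
  rewrite (Cmod_Csub_sym (rho' g) (rho' f)) in *; lra.
Qed.

Lemma char_unif_cont_anqie : is_anqie (fun f => A f /\ char_unif_cont F f).
Proof.
  split; [| split; [| split; [| split; [| split; [| split; [| split]]]]]].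
  - intros f [Hf _]; apply (anqie_bounded HA f Hf).
  - split; [apply (anqie_one HA) | apply char_unif_cont_const].
  - intros f g [Hf Nf] [Hg Ng]; split; [anqie_closure HA | apply char_unif_cont_add; auto].
  - intros c f [Hf Nf]; split; [anqie_closure HA |].
    apply (char_unif_cont_mul (fun _ => c)); auto using char_unif_cont_const.
    apply (anqie_const HA).
  - intros f g [Hf Nf] [Hg Ng]; split; [anqie_closure HA | apply char_unif_cont_mul; auto].
  - intros f [Hf Nf]; split; [anqie_closure HA | apply char_unif_cont_conj; auto].
  - intros f Hb Hap.
    assert (Hf : A f).
    { apply (anqie_closed HA); auto.
      intros e He; destruct (Hap e He) as [g [[Hg _] Hd]]; eauto. }
    split; [| apply char_unif_cont_closed]; auto.
  - intros f [Hf Nf]; split; [apply (anqie_shift HA) | apply char_unif_cont_shift]; auto.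
Qed.

Lemma gen_anqie_unif_cont f : A f -> char_unif_cont F f.
Proof.
  intros Hf; apply (Hf (fun f => A f /\ char_unif_cont F f) char_unif_cont_anqie).
  intros i; split; [apply gen_anqie_gen |].
  intros eps He; exists i, eps; split; auto; intros rho rho' _ _ Hc; apply (Hc i 0%nat); lia.
Qed.

End UniformContinuity.

Lemma uniform_bound_upto (P : nat -> R -> Prop) :
  (forall i M M', M <= M' -> P i M -> P i M') -> (forall i, exists M, P i M) ->
  forall K, exists M, 0 <= M /\ forall i, (i <= K)%nat -> P i M.
Proof.
  intros Hmono Hex K; induction K as [| K [M [HM0 HM]]].
  - destruct (Hex 0%nat) as [M HM]; exists (Rmax M 0); split; [apply Rmax_r |].
    intros i Hi; replace i with 0%nat by lia; apply (Hmono _ M); [apply Rmax_l | auto].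
  - destruct (Hex (S K)) as [M' HM']; exists (Rmax M M').
    split; [eapply Rle_trans; [apply HM0 | apply Rmax_l] |].
    intros i Hi; destruct (Nat.eq_dec i (S K)) as [-> |].
    + apply (Hmono _ M'); [apply Rmax_r | auto].
    + apply (Hmono _ M); [apply Rmax_l | apply HM; lia].
Qed.

Lemma inv_INR_S_lt e : e > 0 -> exists N, forall n, (N <= n)%nat -> / INR (S n) < e.
Proof.
  intros He; destruct (archimed_cor1 e He) as [N [HN HN0]]; exists N; intros n Hn.
  apply Rle_lt_trans with (/ INR N); [| auto].
  apply Rinv_le_contravar; [apply lt_0_INR; auto | apply le_INR; lia].
Qed.

Definition strict_incr (phi : nat -> nat) : Prop := forall p, (phi p < phi (S p))%nat.

Lemma strict_incr_ge phi : strict_incr phi -> forall p, (p <= phi p)%nat.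
Proof. intros H p; induction p; [lia | specialize (H p); lia]. Qed.

Lemma strict_incr_lt phi : strict_incr phi -> forall p q, (p < q)%nat -> (phi p < phi q)%nat.
Proof.
  intros H p q Hpq; induction q; [lia |].
  destruct (Nat.eq_dec p q) as [-> | ]; [apply H |].
  specialize (H q); specialize (IHq ltac:(lia)); lia.
Qed.

Lemma strict_incr_comp f g : strict_incr f -> strict_incr g -> strict_incr (fun p => f (g p)).
Proof. intros Hf Hg p; apply strict_incr_lt; auto. Qed.

Lemma Un_cv_subseq u l phi : strict_incr phi -> Un_cv u l -> Un_cv (fun p => u (phi p)) l.
Proof.
  intros Hp Hu eps He; destruct (Hu eps He) as [N HN]; exists N.
  intros n Hn; apply HN; pose proof (strict_incr_ge phi Hp n); lia.
Qed.

Lemma bounded_cv_subseq (y : nat -> R) B : (forall p, Rabs (y p) <= B) ->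
  exists phi, strict_incr phi /\ exists l, Un_cv (fun p => y (phi p)) l.
Proof.
  intros HB.
  destruct (Bolzano_Weierstrass y (fun c => -B <= c <= B) (compact_P3 (-B) B)) as [l Hl].
  { intros n; specialize (HB n); pose proof (Rle_abs (y n)); pose proof (Rle_abs (- y n)); rewrite Rabs_Ropp in *; lra. }
  assert (Hex : forall N k, exists p, (N <= p)%nat /\ Rabs (y p - l) < / INR (S k)).
  { intros N k; assert (Hpos : 0 < / INR (S k)) by (apply Rinv_0_lt_compat, lt_0_INR; lia).
    destruct (Hl (disc l (mkposreal _ Hpos)) N) as [p [Hp Hd]].
    - exists (mkposreal _ Hpos); intros z Hz; auto.
    - exists p; split; auto. }
  set (pick := fun N k => epsilon (inhabits 0%nat)
                 (fun p => (N <= p)%nat /\ Rabs (y p - l) < / INR (S k))).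
  assert (Hpick : forall N k, (N <= pick N k)%nat /\ Rabs (y (pick N k) - l) < / INR (S k))
    by (intros; apply epsilon_spec, Hex).
  set (phi := fix phi k :=
         match k with O => pick O O | S k' => pick (S (phi k')) (S k') end).
  exists phi; split.
  - intros p; simpl; destruct (Hpick (S (phi p)) (S p)); lia.
  - exists l; intros eps He; destruct (inv_INR_S_lt eps He) as [N HN]; exists N.
    intros n Hn; unfold R_dist; eapply Rlt_trans; [| apply (HN n Hn)].
    destruct n; simpl; apply Hpick.
Qed.

Definition cv_subseq (y : nat -> R) : nat -> nat :=
  epsilon (inhabits (fun p => p))
    (fun phi => strict_incr phi /\ exists l, Un_cv (fun p => y (phi p)) l).

Lemma cv_subseq_spec y B : (forall p, Rabs (y p) <= B) ->
  strict_incr (cv_subseq y) /\ exists l, Un_cv (fun p => y (cv_subseq y p)) l.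
Proof. intros HB; unfold cv_subseq; apply epsilon_spec; exact (bounded_cv_subseq y B HB). Qed.

Lemma diagonal_cv_subseq (x : nat -> nat -> R) (B : nat -> R) :
  (forall p c, Rabs (x p c) <= B c) ->
  exists phi, strict_incr phi /\ forall c, exists l, Un_cv (fun p => x (phi p) c) l.
Proof.
  intros HB.
  (* Phi (S c) refines Phi c so that coordinate c converges along it *)
  set (Phi := fix Phi c := match c with
              | O => fun p : nat => p
              | S c' => fun p => Phi c' (cv_subseq (fun q => x (Phi c' q) c') p) end).
  assert (Hstep : forall c, strict_incr (cv_subseq (fun q => x (Phi c q) c)) /\
     exists l, Un_cv (fun p => x (Phi c (cv_subseq (fun q => x (Phi c q) c) p)) c) l)
    by (intros c; exact (cv_subseq_spec (fun q => x (Phi c q) c) (B c) (fun p => HB _ c))).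
  assert (Hincr : forall c, strict_incr (Phi c)).
  { induction c; [intros p; simpl; lia |]; simpl; apply strict_incr_comp; [apply IHc | apply Hstep]. }
  assert (Hrefine : forall c d p, exists q, (p <= q)%nat /\ Phi (d + c)%nat p = Phi c q).
  { intros c d; induction d as [| d IHd]; intros p; [exists p; auto |].
    destruct (IHd (cv_subseq (fun q => x (Phi (d + c)%nat q) (d + c)%nat) p)) as [q [Hq E]].
    exists q; split; [| exact E].
    pose proof (strict_incr_ge _ (proj1 (Hstep (d + c)%nat)) p); lia. }
  exists (fun p => Phi p p); split.
  - intros p; simpl.
    pose proof (strict_incr_ge _ (proj1 (Hstep p)) (S p)).
    destruct (Nat.eq_dec (cv_subseq (fun q => x (Phi p q) p) (S p)) (S p)) as [E | E].
    + rewrite E; apply Hincr.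
    + apply strict_incr_lt; [apply Hincr | lia].
  - intros c; destruct (proj2 (Hstep c)) as [l Hl]; exists l.
    intros eps He; destruct (Hl eps He) as [N HN]; exists (Nat.max N (S c)); intros n Hn.
    destruct (Hrefine (S c) (n - S c)%nat n) as [q [Hq E]].
    replace (n - S c + S c)%nat with n in E by lia; rewrite E; apply HN; lia.
Qed.

Definition Ccv (u : nat -> C) (l : C) : Prop :=
  forall eps, eps > 0 -> exists N, forall n, (N <= n)%nat -> Cmod (Csub (u n) l) < eps.

Lemma Ccv_of_parts u l :
  Un_cv (fun n => Re (u n)) (Re l) -> Un_cv (fun n => Im (u n)) (Im l) -> Ccv u l.
Proof.
  intros H1 H2 eps He.
  destruct (H1 (eps / 2)) as [N1 HN1]; [lra |]; destruct (H2 (eps / 2)) as [N2 HN2]; [lra |].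
  exists (Nat.max N1 N2); intros n Hn; eapply Rle_lt_trans; [apply Cmod_le_Rabs_Re_Im |].
  specialize (HN1 n ltac:(lia)); specialize (HN2 n ltac:(lia)); unfold R_dist in *; simpl; lra.
Qed.

Lemma diagonal_Ccv_subseq (z : nat -> nat -> C) (B : nat -> R) :
  (forall p c, Cmod (z p c) <= B c) ->
  exists phi, strict_incr phi /\ forall c, exists l, Ccv (fun p => z (phi p) c) l.
Proof.
  intros HB.
  destruct (diagonal_cv_subseq (fun p c => Re (z p c)) B) as [phi1 [Hp1 H1]].
  { intros; eapply Rle_trans; [apply Rabs_Re_le_Cmod | apply HB]. }
  destruct (diagonal_cv_subseq (fun p c => Im (z (phi1 p) c)) B) as [phi2 [Hp2 H2]].
  { intros; eapply Rle_trans; [apply Rabs_Im_le_Cmod | apply HB]. }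
  exists (fun p => phi1 (phi2 p)); split; [apply strict_incr_comp; auto |].
  intros c; destruct (H1 c) as [l1 Hl1], (H2 c) as [l2 Hl2].
  exists (mkC l1 l2); apply Ccv_of_parts; simpl; auto.
  apply (Un_cv_subseq (fun p => Re (z (phi1 p) c))); auto.
Qed.

Lemma Ccv_unique u l1 l2 : Ccv u l1 -> Ccv u l2 -> l1 = l2.
Proof.
  intros H1 H2; apply NNPP; intros Hne.
  set (d := Cmod (Csub l1 l2)).
  assert (Hp : 0 < d).
  { destruct (Cmod_ge0 (Csub l1 l2)) as [| E]; auto; exfalso; apply Hne.
    symmetry in E; apply Cmod_eq0 in E.
    assert (Re (Csub l1 l2) = 0 /\ Im (Csub l1 l2) = 0) by (rewrite E; auto).
    apply C_ext; simpl in *; lra. }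
  destruct (H1 (d / 2)) as [N1 HN1]; [lra |]; destruct (H2 (d / 2)) as [N2 HN2]; [lra |].
  specialize (HN1 (Nat.max N1 N2) ltac:(lia)); specialize (HN2 (Nat.max N1 N2) ltac:(lia)).
  pose proof (Cmod_sub_triangle l1 (u (Nat.max N1 N2)) l2) as H.
  rewrite (Cmod_Csub_sym l1 (u _)) in H; fold d in H; lra.
Qed.

Lemma Ccv_const c : Ccv (fun _ => c) c.
Proof.
  intros eps He; exists O; intros.
  replace (Csub c c) with C0 by (apply C_ext; simpl; ring); rewrite Cmod_C0; lra.
Qed.

Lemma Ccv_add u v a b : Ccv u a -> Ccv v b -> Ccv (fun n => Cadd (u n) (v n)) (Cadd a b).
Proof.
  intros Hu Hv eps He.
  destruct (Hu (eps / 2)) as [N1 H1]; [lra |]; destruct (Hv (eps / 2)) as [N2 H2]; [lra |].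
  exists (Nat.max N1 N2); intros n Hn; eapply Rle_lt_trans; [apply Cmod_sub_Cadd |].
  specialize (H1 n ltac:(lia)); specialize (H2 n ltac:(lia)); lra.
Qed.

Lemma Ccv_bounded u a : Ccv u a -> exists M, 0 <= M /\ forall n, Cmod (u n) <= M.
Proof.
  intros H; destruct (H 1) as [N HN]; [lra |].
  destruct (uniform_bound_upto (fun n M => Cmod (u n) <= M)) with (K := N) as [M [HM0 HM]].
  { intros; lra. }
  { intros n; exists (Cmod (u n)); lra. }
  exists (Rmax M (Cmod a + 1)); split; [eapply Rle_trans; [apply HM0 | apply Rmax_l] |].
  intros n; destruct (le_lt_dec n N).
  - eapply Rle_trans; [apply HM; auto | apply Rmax_l].
  - eapply Rle_trans; [| apply Rmax_r]; specialize (HN n ltac:(lia)).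
    pose proof (Cmod_sub_triangle (u n) a C0); rewrite !Csub_C0 in *; lra.
Qed.

Lemma Ccv_mul u v a b : Ccv u a -> Ccv v b -> Ccv (fun n => Cmul (u n) (v n)) (Cmul a b).
Proof.
  intros Hu Hv; destruct (Ccv_bounded u a Hu) as [M [HM0 HM]].
  intros eps He; pose proof (Cmod_ge0 b).
  set (e1 := eps / (M + Cmod b + 1)).
  assert (He1 : 0 < e1) by (apply Rdiv_lt_0_compat; lra).
  assert (He1' : (M + Cmod b) * e1 < eps).
  { assert (e1 * (M + Cmod b + 1) = eps) by (unfold e1; field; lra); nra. }
  destruct (Hu e1 He1) as [N1 H1], (Hv e1 He1) as [N2 H2].
  exists (Nat.max N1 N2); intros n Hn; eapply Rle_lt_trans; [apply Cmod_sub_Cmul |].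
  specialize (H1 n ltac:(lia)); specialize (H2 n ltac:(lia)); specialize (HM n).
  pose proof (Cmod_ge0 (Csub (v n) b)); pose proof (Cmod_ge0 (Csub (u n) a)); nra.
Qed.

Lemma Ccv_of_Cauchy u :
  (forall eps, eps > 0 -> exists N, forall n m, (N <= n)%nat -> (N <= m)%nat ->
     Cmod (Csub (u n) (u m)) < eps) ->
  exists l, Ccv u l.
Proof.
  intros H.
  assert (Hr : Cauchy_crit (fun n => Re (u n))).
  { intros eps He; destruct (H eps He) as [N HN]; exists N; intros n m Hn Hm; unfold R_dist.
    eapply Rle_lt_trans; [apply (Rabs_Re_le_Cmod (Csub (u n) (u m))) | auto]. }
  assert (Hi : Cauchy_crit (fun n => Im (u n))).
  { intros eps He; destruct (H eps He) as [N HN]; exists N; intros n m Hn Hm; unfold R_dist.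
    eapply Rle_lt_trans; [apply (Rabs_Im_le_Cmod (Csub (u n) (u m))) | auto]. }
  destruct (R_complete _ Hr) as [a Ha], (R_complete _ Hi) as [b Hb].
  exists (mkC a b); apply Ccv_of_parts; auto.
Qed.

Lemma eventually_forall_In {X : Type} (l : list X) (P : X -> nat -> Prop) :
  (forall x, In x l -> exists N, forall p, (N <= p)%nat -> P x p) ->
  exists N, forall p, (N <= p)%nat -> forall x, In x l -> P x p.
Proof.
  induction l as [| a l IH]; intros H; [exists O; intros p _ x [] |].
  destruct (H a (or_introl eq_refl)) as [N1 H1], IH as [N2 H2]; [intros; apply H; right; auto |].
  exists (Nat.max N1 N2); intros p Hp x [<- | Hx]; [apply H1 | apply H2]; auto; lia.
Qed.

(** * Sequential compactness and Lebesgue numbers *)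

Lemma is_char_pointwise_limit A (r : nat -> arith -> C) rs : is_anqie A ->
  (forall p, is_char A (r p)) -> (forall f, A f -> Ccv (fun p => r p f) (rs f)) ->
  is_char A rs.
Proof.
  intros HA Hr Hrs; split; [| split; [| split]].
  - apply (Ccv_unique (fun p => r p (fun _ => C1))); [apply Hrs, (anqie_one HA) |].
    replace (fun p => r p (fun _ => C1)) with (fun _ : nat => C1); [apply Ccv_const |].
    apply functional_extensionality; intros p; symmetry; apply (char_one (Hr p)).
  - intros f g Hf Hg; apply (Ccv_unique (fun p => r p (fun n => Cadd (f n) (g n))));
      [apply Hrs; anqie_closure HA |].
    replace (fun p => r p (fun n => Cadd (f n) (g n)))
      with (fun p => Cadd (r p f) (r p g)); [apply Ccv_add; auto |].
    apply functional_extensionality; intros p; symmetry; apply (char_add (Hr p)); auto.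
  - intros c f Hf; apply (Ccv_unique (fun p => r p (fun n => Cmul c (f n))));
      [apply Hrs; anqie_closure HA |].
    replace (fun p => r p (fun n => Cmul c (f n))) with (fun p => Cmul c (r p f));
      [apply (Ccv_mul (fun _ => c)); auto using Ccv_const |].
    apply functional_extensionality; intros p; symmetry; apply (char_scal (Hr p)); auto.
  - intros f g Hf Hg; apply (Ccv_unique (fun p => r p (fun n => Cmul (f n) (g n))));
      [apply Hrs; anqie_closure HA |].
    replace (fun p => r p (fun n => Cmul (f n) (g n)))
      with (fun p => Cmul (r p f) (r p g)); [apply Ccv_mul; auto |].
    apply functional_extensionality; intros p; symmetry; apply (char_mul (Hr p)); auto.
Qed.

Section CharacterSpace.
Variable F : nat -> arith.
Hypothesis HF : forall i, linf_bounded (F i).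
Let A := gen_anqie F.
Let HA : is_anqie A := gen_anqie_is_anqie F HF.

Lemma char_seq_Cauchy (r : nat -> arith -> C) : (forall p, is_char A (r p)) ->
  (forall i j, exists l, Ccv (fun p => r p (shiftn j (F i))) l) ->
  forall f, A f -> exists l, Ccv (fun p => r p f) l.
Proof.
  intros Hr Hco f Hf; apply Ccv_of_Cauchy; intros eps He.
  destruct (gen_anqie_unif_cont F HF f Hf eps He) as [K [s [Hs Hn]]].
  set (L := list_prod (seq 0 (S K)) (seq 0 (S K))).
  destruct (eventually_forall_In L (fun x p => forall q, (p <= q)%nat ->
     Cmod (Csub (r p (shiftn (snd x) (F (fst x)))) (r q (shiftn (snd x) (F (fst x))))) < s))
    as [N HN].
  { intros [i j] _; destruct (Hco i j) as [l Hl]; destruct (Hl (s / 2)) as [N HN]; [lra |].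
    exists N; intros p Hp q Hq; simpl.
    pose proof (Cmod_sub_triangle (r p (shiftn j (F i))) l (r q (shiftn j (F i)))) as H.
    rewrite (Cmod_Csub_sym l) in H; pose proof (HN p Hp); pose proof (HN q ltac:(lia)); lra. }
  exists N; intros n m Hnm Hmn.
  assert (Hcl : forall a b, (N <= a)%nat -> (a <= b)%nat -> chars_close F (r a) (r b) K s).
  { intros a b Ha Hab i j Hi Hj; apply (HN a Ha (i, j)); auto.
    apply in_prod; apply in_seq; lia. }
  destruct (le_lt_dec n m); [| rewrite Cmod_Csub_sym]; apply Hn; auto; apply Hcl; lia.
Qed.

Lemma char_seq_cv_subseq (r : nat -> arith -> C) : (forall p, is_char A (r p)) ->
  exists phi rs, strict_incr phi /\ is_char A rs /\
    forall f, A f -> Ccv (fun p => r (phi p) f) (rs f).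
Proof.
  intros Hr.
  set (M := fun i => epsilon (inhabits 0) (fun M => forall n, Cmod (F i n) <= M)).
  assert (HM : forall i n, Cmod (F i n) <= M i)
    by (intros i; apply (epsilon_spec (inhabits 0) (fun M => forall n, Cmod (F i n) <= M)), HF).
  (* enumerate the coordinates (i, j) by Cantor's pairing *)
  set (z := fun p c => r p (shiftn (snd (of_nat c)) (F (fst (of_nat c))))).
  destruct (diagonal_Ccv_subseq z (fun c => M (fst (of_nat c)))) as [phi [Hphi Hz]].
  { intros p c; unfold z; apply (Cmod_char_le HA (Hr p)); [anqie_closure HA; apply gen_anqie_gen |].
    intros n; rewrite shiftn_apply; apply HM. }
  assert (Hcv : forall f, A f -> exists l, Ccv (fun p => r (phi p) f) l).
  { apply char_seq_Cauchy; [intros; apply Hr |].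
    intros i j; destruct (Hz (to_nat (i, j))) as [l Hl]; exists l.
    unfold z in Hl; rewrite cancel_of_to in Hl; exact Hl. }
  set (rs := fun f => epsilon (inhabits C0) (fun l => Ccv (fun p => r (phi p) f) l)).
  assert (Hrs : forall f, A f -> Ccv (fun p => r (phi p) f) (rs f))
    by (intros f Hf; apply (epsilon_spec (inhabits C0) (fun l => Ccv _ l)), Hcv, Hf).
  exists phi, rs; split; [| split]; auto.
  apply (is_char_pointwise_limit A (fun p => r (phi p))); auto.
Qed.

Lemma lebesgue_number Vs : open_cover A Vs ->
  exists K s, s > 0 /\ forall rho, is_char A rho -> exists idx, forall rho', is_char A rho' ->
    chars_close F rho rho' K s -> nth idx Vs (fun _ => False) rho'.
Proof.
  intros [Hop Hcov]; apply NNPP; intros Hn.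
  set (Bad := fun p rho => is_char A rho /\ forall idx, exists rho', is_char A rho' /\
      chars_close F rho rho' p (/ INR (S p)) /\ ~ nth idx Vs (fun _ => False) rho').
  assert (Hbad : forall p, exists rho, Bad p rho).
  { intros p; apply NNPP; intros H1; apply Hn; exists p, (/ INR (S p)).
    split; [apply Rinv_0_lt_compat, lt_0_INR; lia |].
    intros rho Hr; apply NNPP; intros H2; apply H1; exists rho; split; auto; intros idx.
    apply NNPP; intros H3; apply H2; exists idx; intros rho' Hr' Hc.
    apply NNPP; intros H4; apply H3; exists rho'; auto. }
  set (r := fun p => epsilon (inhabits (ev 0)) (Bad p)).
  assert (Hr : forall p, Bad p (r p)) by (intros p; apply epsilon_spec, Hbad).
  destruct (char_seq_cv_subseq r) as [phi [rs [Hphi [Hrs Hcv]]]]; [intros; apply Hr |].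
  destruct (Hcov rs Hrs) as [U [HU HUr]].
  destruct (In_nth Vs U (fun _ => False) HU) as [idx [_ Hidx]].
  destruct (Hop U HU rs Hrs HUr) as [l [eps0 [He0 [HlA Hl]]]].
  (* late bad characters are so close to rs that their whole bad neighbourhood lies in U *)
  destruct (eventually_forall_In l (fun f p => forall rho', is_char A rho' ->
      chars_close F (r (phi p)) rho' (phi p) (/ INR (S (phi p))) ->
      Cmod (Csub (rho' f) (rs f)) < eps0)) as [N HN].
  { intros f Hf.
    destruct (gen_anqie_unif_cont F HF f (HlA f Hf) (eps0 / 2)) as [K [s [Hs Hnice]]]; [lra |].
    destruct (inv_INR_S_lt s Hs) as [N1 HN1].
    destruct (Hcv f (HlA f Hf) (eps0 / 2)) as [N2 HN2]; [lra |].
    exists (Nat.max K (Nat.max N1 N2)); intros p Hp rho' Hr' Hc.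
    pose proof (strict_incr_ge phi Hphi p).
    assert (Hc' : chars_close F (r (phi p)) rho' K s)
      by (eapply chars_close_mono; eauto; [lia | left; apply HN1; lia]).
    specialize (Hnice (r (phi p)) rho' (proj1 (Hr _)) Hr' Hc'); specialize (HN2 p ltac:(lia)).
    pose proof (Cmod_sub_triangle (rho' f) (r (phi p) f) (rs f)) as Htri.
    rewrite (Cmod_Csub_sym (rho' f) (r (phi p) f)) in Htri; lra. }
  destruct (proj2 (Hr (phi N)) idx) as [rho' [Hr' [Hc Hnot]]].
  apply Hnot; rewrite Hidx; apply Hl; auto; intros f Hf; apply (HN N (le_n N) f Hf rho' Hr' Hc).
Qed.

End CharacterSpace.

(** * Covering numbers and cover entropy *)

Section Fekete.
Variable a : nat -> R.
Hypothesis a_ge0 : forall n, 0 <= a n.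
Hypothesis a_subadd : forall m n, a (m + n)%nat <= a m + a n.

Lemma subadditive_iter M q r : a (q * M + r)%nat <= INR q * a M + a r.
Proof.
  induction q; [simpl; lra |].
  replace (S q * M + r)%nat with (M + (q * M + r))%nat by lia.
  eapply Rle_trans; [apply a_subadd | rewrite S_INR; lra].
Qed.

Lemma subadditive_ratio_le M C : (0 < M)%nat -> (forall r, (r < M)%nat -> a r <= C) ->
  forall k, (0 < k)%nat -> a k / INR k <= a M / INR M + C / INR k.
Proof.
  intros HM HC k Hk.
  pose proof (Nat.div_mod k M ltac:(lia)) as Ek; pose proof (Nat.mod_upper_bound k M ltac:(lia)).
  set (q := (k / M)%nat) in *; set (r := (k mod M)%nat) in *.
  assert (Hak : a k <= INR q * a M + C).
  { rewrite Ek, Nat.mul_comm; eapply Rle_trans; [apply subadditive_iter |].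
    specialize (HC r ltac:(lia)); lra. }
  assert (HkR : 0 < INR k) by (apply lt_0_INR; lia).
  assert (HMR : 0 < INR M) by (apply lt_0_INR; lia).
  assert (HqM : INR q * INR M <= INR k) by (rewrite <- mult_INR; apply le_INR; lia).
  pose proof (a_ge0 M).
  apply Rmult_le_reg_r with (INR k * INR M); [nra |].
  replace ((a M / INR M + C / INR k) * (INR k * INR M)) with (INR k * a M + C * INR M)
    by (field; lra).
  replace (a k / INR k * (INR k * INR M)) with (a k * INR M) by (field; lra).
  nra.
Qed.

Lemma fekete : exists h, Un_cv (fun n => a (S n) / INR (S n)) h.
Proof.
  set (E := fun x => exists n, x = - (a (S n) / INR (S n))).
  destruct (completeness E) as [m [Hub Hlub]].
  { exists 0; intros x [n ->].
    assert (0 <= a (S n) / INR (S n)) by (apply Rmult_le_pos; [auto | left; apply Rinv_0_lt_compat, lt_0_INR; lia]).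
    lra. }
  { exists (- (a 1%nat / INR 1)), O; auto. }
  (* the limit is the infimum h = - m of the ratios *)
  set (h := - m).
  assert (Hlow : forall n, h <= a (S n) / INR (S n)).
  { intros n; assert (- (a (S n) / INR (S n)) <= m) by (apply Hub; exists n; auto).
    unfold h; lra. }
  exists h; intros eps He.
  assert (Happ : exists m0, a (S m0) / INR (S m0) < h + eps / 2).
  { apply NNPP; intros Hn.
    assert (is_upper_bound E (m - eps / 2)) as Hm.
    { intros x [n ->]; apply Rnot_lt_le; intros Hc; apply Hn; exists n; unfold h; lra. }
    specialize (Hlub _ Hm); lra. }
  destruct Happ as [m0 Hm0].
  destruct (uniform_bound_upto (fun r C => a r <= C)) with (K := S m0) as [C [HC0 HC]].
  { intros; lra. }
  { intros r; exists (a r); lra. }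
  destruct (inv_INR_S_lt (eps / 2 / (C + 1))) as [N HN]; [apply Rdiv_lt_0_compat; lra |].
  exists N; intros n Hn; unfold R_dist; specialize (Hlow n).
  pose proof (subadditive_ratio_le (S m0) C ltac:(lia) ltac:(intros; apply HC; lia) (S n) ltac:(lia)).
  assert (C / INR (S n) < eps / 2).
  { specialize (HN n Hn).
    assert (HSn : 0 < / INR (S n)) by (apply Rinv_0_lt_compat, lt_0_INR; lia).
    unfold Rdiv at 1; apply Rle_lt_trans with ((C + 1) * / INR (S n)); [nra |].
    replace (eps / 2) with ((C + 1) * (eps / 2 / (C + 1))) by (field; lra).
    apply Rmult_lt_compat_l; lra. }
  rewrite Rabs_right; lra.
Qed.

End Fekete.

Lemma nth_map_seq (f : nat -> nat) j n : (j < n)%nat -> nth j (map f (seq 0 n)) 0%nat = f j.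
Proof.
  intros; rewrite (nth_indep _ _ (f 0%nat)) by (rewrite length_map, length_seq; auto).
  rewrite map_nth, seq_nth; auto.
Qed.

Fixpoint words (L n : nat) : list (list nat) :=
  match n with
  | O => nil :: nil
  | S n' => flat_map (fun a => map (cons a) (words L n')) (seq 0 L)
  end.

Lemma in_words L n w : length w = n -> (forall a, In a w -> (a < L)%nat) -> In w (words L n).
Proof.
  revert w; induction n; intros w Hl Ha; destruct w as [| a w]; simpl in *; auto; try lia.
  apply in_flat_map; exists a; split; [apply in_seq; specialize (Ha a (or_introl eq_refl)); lia |].
  apply in_map, IHn; auto.
Qed.

Lemma ln_le x y : 0 < x -> x <= y -> ln x <= ln y.
Proof. intros Hx [Hxy | <-]; [left; apply ln_increasing | right]; auto. Qed.

Lemma covers_with_pos B Us n k : covers_with B Us n k -> (1 <= k)%nat.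
Proof.
  intros [ws [L H]]; destruct (H (ev 0) (ev_char B 0)) as [w [Hw _]].
  destruct ws; simpl in *; [contradiction | lia].
Qed.

Section CoverNumbers.
Context {B : arith -> Prop} (HB : is_anqie B).
Context {Us : list ((arith -> C) -> Prop)} (HU : open_cover B Us).

Lemma covers_with_words n : covers_with B Us n (length (words (length Us) n)).
Proof.
  exists (words (length Us) n); split; auto; intros rho Hr.
  set (P := fun j i => (i < length Us)%nat /\ nth i Us (fun _ => False) (Amap_iter j rho)).
  set (idx := fun j => epsilon (inhabits 0%nat) (P j)).
  assert (Hidx : forall j, P j (idx j)).
  { intros j; apply epsilon_spec.
    destruct (proj2 HU (Amap_iter j rho) (char_Amap_iter B j rho HB Hr)) as [U [HUi HUr]].
    destruct (In_nth Us U (fun _ => False) HUi) as [i [Hi E]]; exists i; unfold P; rewrite E; split; auto. }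
  exists (map idx (seq 0 n)); split.
  - apply in_words; [rewrite length_map, length_seq; auto |].
    intros a Ha; apply in_map_iff in Ha; destruct Ha as [j [<- _]]; apply Hidx.
  - intros j Hj; unfold word_set; rewrite nth_map_seq; auto; apply Hidx.
Qed.

Definition word_prefix (m : nat) (w : list nat) : list nat :=
  map (fun j => nth j w 0%nat) (seq 0 m).

Lemma covers_with_mul m n k1 k2 : covers_with B Us m k1 -> covers_with B Us n k2 ->
  covers_with B Us (m + n) (k1 * k2).
Proof.
  intros [ws1 [L1 H1]] [ws2 [L2 H2]].
  exists (flat_map (fun w1 => map (fun w2 => word_prefix m w1 ++ w2) ws2) ws1); split.
  - subst; clear H1; induction ws1; simpl; auto; rewrite length_app, length_map, IHws1; lia.
  - intros rho Hr; destruct (H1 rho Hr) as [w1 [Hw1 Ws1]].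
    destruct (H2 (Amap_iter m rho) (char_Amap_iter B m rho HB Hr)) as [w2 [Hw2 Ws2]].
    exists (word_prefix m w1 ++ w2); split.
    + apply in_flat_map; exists w1; split; auto; apply in_map; auto.
    + intros j Hj.
      assert (Hpl : length (word_prefix m w1) = m)
        by (unfold word_prefix; rewrite length_map, length_seq; auto).
      destruct (le_lt_dec m j).
      * rewrite app_nth2, Hpl by lia.
        replace (Amap_iter j rho) with (Amap_iter (j - m) (Amap_iter m rho))
          by (rewrite Amap_iter_add; f_equal; lia).
        apply Ws2; lia.
      * rewrite app_nth1 by lia; unfold word_prefix; rewrite nth_map_seq; auto.
Qed.

Lemma covnum_exists n : exists N, is_covnum B Us n N.
Proof.
  destruct (dec_inh_nat_subset_has_unique_least_element (covers_with B Us n))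
    as [N [[HN Hmin] _]]; [intros k; apply classic | exists (length (words (length Us) n)) |].
  - apply covers_with_words.
  - exists N; split; auto.
Qed.

Lemma cover_entropy_exists : exists h, cover_entropy B Us h.
Proof.
  set (Nc := fun n => epsilon (inhabits 0%nat) (fun N => is_covnum B Us n N)).
  assert (HN : forall n, is_covnum B Us n (Nc n))
    by (intros n; apply (epsilon_spec (inhabits 0%nat) (fun N => is_covnum B Us n N)), covnum_exists).
  assert (Hpos : forall n, 1 <= INR (Nc n)).
  { intros n; apply (le_INR 1); apply (covers_with_pos B Us n), HN. }
  (* ln N is subadditive since N(m + n) <= N(m) N(n) *)
  destruct (fekete (fun n => ln (INR (Nc n)))) as [h Hh].
  - intros n; rewrite <- ln_1; apply ln_le; auto; lra.
  - intros m n; rewrite <- ln_mult by (pose proof (Hpos m); pose proof (Hpos n); lra).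
    apply ln_le; [pose proof (Hpos (m + n)%nat); lra |].
    rewrite <- mult_INR; apply le_INR, (HN (m + n)%nat), covers_with_mul; apply HN.
  - exists h, Nc; split; auto.
Qed.

End CoverNumbers.

(** * Grid covers *)

Definition cover_join (L1 L2 : list ((arith -> C) -> Prop)) : list ((arith -> C) -> Prop) :=
  flat_map (fun U => map (fun W => fun rho => U rho /\ W rho) L2) L1.

Lemma in_cover_join_inv L1 L2 V : In V (cover_join L1 L2) ->
  exists U W, In U L1 /\ In W L2 /\ V = fun rho => U rho /\ W rho.
Proof.
  intros H; apply in_flat_map in H; destruct H as [U [HU HV]].
  apply in_map_iff in HV; destruct HV as [W [<- HW]]; exists U, W; auto.
Qed.

Lemma in_cover_join L1 L2 U W : In U L1 -> In W L2 ->
  In (fun rho => U rho /\ W rho) (cover_join L1 L2).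
Proof.
  intros; apply in_flat_map; exists U; split; auto.
  apply (in_map (fun W => fun rho => U rho /\ W rho)); auto.
Qed.

Definition int_range (Z0 : nat) : list Z :=
  map (fun n => (Z.of_nat n - Z.of_nat Z0)%Z) (seq 0 (2 * Z0 + 1)).

Lemma in_int_range Z0 z : (- Z.of_nat Z0 <= z <= Z.of_nat Z0)%Z -> In z (int_range Z0).
Proof.
  intros; apply in_map_iff; exists (Z.to_nat (z + Z.of_nat Z0)).
  split; [rewrite Z2Nat.id by lia; lia | apply in_seq; lia].
Qed.

Definition strips (t : R) (Z0 : nat) (x : (arith -> C) -> R) : list ((arith -> C) -> Prop) :=
  map (fun z => fun rho => Rabs (x rho - IZR z * t) < t) (int_range Z0).

Definition grid (t : R) (Z0 : nat) (cs : list ((arith -> C) -> R)) :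
  list ((arith -> C) -> Prop) :=
  fold_right (fun x acc => cover_join (strips t Z0 x) acc) ((fun _ => True) :: nil) cs.

Section Grid.
Variable B : arith -> Prop.
Variables t M : R.
Hypothesis Ht : t > 0.
Hypothesis HM : 0 <= M.
Let Z0 := Z.to_nat (up (M / t)).

Lemma int_range_round y : Rabs y <= M ->
  exists z, In z (int_range Z0) /\ Rabs (y - IZR z * t) < t.
Proof.
  intros Hy; destruct (archimed (y / t)) as [A1 A2], (archimed (M / t)) as [B1 B2].
  set (z := (up (y / t) - 1)%Z); exists z.
  assert (Hyt : - (M / t) <= y / t <= M / t).
  { pose proof (Rle_abs y); pose proof (Rle_abs (- y)); rewrite Rabs_Ropp in *.
    assert (0 < / t) by (apply Rinv_0_lt_compat; auto); unfold Rdiv; split; nra. }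
  assert (HMt : 0 <= M / t) by (apply Rmult_le_pos; auto; left; apply Rinv_0_lt_compat; auto).
  assert (Hz : IZR z = IZR (up (y / t)) - 1) by (unfold z; rewrite minus_IZR; auto).
  split.
  - apply in_int_range; unfold Z0; rewrite Z2Nat.id by (apply le_IZR; lra); split.
    + assert (IZR z > IZR (- up (M / t) - 1)) by (rewrite minus_IZR, opp_IZR; lra).
      apply lt_IZR in H; lia.
    + assert (IZR z < IZR (up (M / t))) by lra; apply lt_IZR in H; lia.
  - replace (y - IZR z * t) with (t * (y / t - IZR (up (y / t)) + 1)) by (rewrite Hz; field; lra).
    rewrite Rabs_mult, !Rabs_right by lra.
    assert (t * (y / t - IZR (up (y / t)) + 1) < t * 1) by (apply Rmult_lt_compat_l; lra); lra.
Qed.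

Definition tame_coord (x : (arith -> C) -> R) : Prop :=
  (exists f, B f /\ forall rho rho', Rabs (x rho' - x rho) <= Cmod (Csub (rho' f) (rho f))) /\
  (forall rho, is_char B rho -> Rabs (x rho) <= M).

Lemma wopen_and U W : wopen B U -> wopen B W -> wopen B (fun rho => U rho /\ W rho).
Proof.
  intros HU HW rho Hr [Ur Wr].
  destruct (HU rho Hr Ur) as [l1 [e1 [He1 [Hl1 H1]]]], (HW rho Hr Wr) as [l2 [e2 [He2 [Hl2 H2]]]].
  exists (l1 ++ l2), (Rmin e1 e2); split; [apply Rmin_glb_lt; auto |]; split.
  - intros f Hf; apply in_app_or in Hf; destruct Hf; auto.
  - intros rho' Hr' Hc; split; [apply H1 | apply H2]; auto; intros f Hf;
      (eapply Rlt_le_trans; [apply Hc; apply in_or_app; auto |]); [apply Rmin_l | apply Rmin_r].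
Qed.

Lemma wopen_strip x z : tame_coord x -> wopen B (fun rho => Rabs (x rho - IZR z * t) < t).
Proof.
  intros [[f [Hf Hx]] _] rho Hr Hin.
  exists (f :: nil), (t - Rabs (x rho - IZR z * t)); split; [lra | split].
  - intros g [<- | []]; auto.
  - intros rho' Hr' Hc; specialize (Hc f (or_introl eq_refl)); specialize (Hx rho rho').
    pose proof (Rabs_triang (x rho' - x rho) (x rho - IZR z * t)) as H.
    replace (x rho' - x rho + (x rho - IZR z * t)) with (x rho' - IZR z * t) in H by ring; lra.
Qed.

Lemma grid_open cs : (forall x, In x cs -> tame_coord x) ->
  forall U, In U (grid t Z0 cs) -> wopen B U.
Proof.
  induction cs as [| x cs IH]; intros Hg U HU; simpl in HU.
  - destruct HU as [<- | []]; intros rho _ _; exists nil, 1; split; [lra | split; auto].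
    intros f [].
  - apply in_cover_join_inv in HU; destruct HU as [U1 [W [H1 [H2 ->]]]].
    apply in_map_iff in H1; destruct H1 as [z [<- _]].
    apply wopen_and; [apply wopen_strip, Hg; left; auto | apply IH; auto].
    intros; apply Hg; right; auto.
Qed.

Lemma grid_covers cs : (forall x, In x cs -> tame_coord x) ->
  forall rho, is_char B rho -> exists U, In U (grid t Z0 cs) /\ U rho.
Proof.
  induction cs as [| x cs IH]; intros Hg rho Hr; [exists (fun _ => True); simpl; auto |].
  destruct (IH (fun y Hy => Hg y (or_intror Hy)) rho Hr) as [W [HW Wr]].
  destruct (int_range_round (x rho)) as [z [Hz Hzr]]; [apply (Hg x (or_introl eq_refl)); auto |].
  exists (fun rho0 => Rabs (x rho0 - IZR z * t) < t /\ W rho0); split; auto.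
  apply in_cover_join; auto.
  apply (in_map (fun z => fun rho => Rabs (x rho - IZR z * t) < t)); auto.
Qed.

Lemma grid_fine cs U : In U (grid t Z0 cs) -> forall rho rho', U rho -> U rho' ->
  forall x, In x cs -> Rabs (x rho - x rho') < 2 * t.
Proof.
  revert U; induction cs as [| y cs IH]; intros U HU rho rho' Ur Ur' x Hx; [destruct Hx |].
  simpl in HU; apply in_cover_join_inv in HU; destruct HU as [U1 [W [H1 [H2 ->]]]].
  destruct Ur as [U1r Wr], Ur' as [U1r' Wr'].
  destruct Hx as [-> | Hx]; [| eapply IH; eauto].
  apply in_map_iff in H1; destruct H1 as [z [<- _]].
  pose proof (Rabs_triang (x rho - IZR z * t) (IZR z * t - x rho')) as H.
  rewrite <- Rabs_Ropp with (x := IZR z * t - x rho') in H.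
  replace (x rho - IZR z * t + (IZR z * t - x rho')) with (x rho - x rho') in H by ring.
  replace (- (IZR z * t - x rho')) with (x rho' - IZR z * t) in H by ring; lra.
Qed.

End Grid.

Lemma gen_anqie_fine_cover G : (forall i, linf_bounded (G i)) -> forall K t, t > 0 ->
  exists Us, open_cover (gen_anqie G) Us /\
    forall U, In U Us -> forall rho rho', U rho -> U rho' ->
      forall i, (i <= K)%nat -> Cmod (Csub (rho (G i)) (rho' (G i))) < 4 * t.
Proof.
  intros HG K t Ht.
  set (B := gen_anqie G); assert (HB : is_anqie B) by (apply gen_anqie_is_anqie; auto).
  destruct (uniform_bound_upto (fun i M => forall n, Cmod (G i n) <= M)) with (K := K)
    as [M [HM0 HM]]; [intros i M M' ? H n; specialize (H n); lra | exact HG |].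
  set (cs := flat_map (fun i => (fun rho : arith -> C => Re (rho (G i))) ::
                                (fun rho : arith -> C => Im (rho (G i))) :: nil) (seq 0 (S K))).
  assert (Hg : forall x, In x cs -> tame_coord B M x).
  { intros x Hx; apply in_flat_map in Hx; destruct Hx as [i [Hi Hx]]; apply in_seq in Hi.
    assert (HGi : B (G i)) by apply gen_anqie_gen.
    assert (Hbd : forall rho, is_char B rho -> Cmod (rho (G i)) <= M)
      by (intros rho Hr; apply (Cmod_char_le HB Hr (G i) M HGi); intros n; apply HM; lia).
    destruct Hx as [<- | [<- | []]]; (split; [exists (G i); split; auto; intros rho rho' |
      intros rho Hr; eapply Rle_trans; [| apply (Hbd rho Hr)]]).
    - apply (Rabs_Re_le_Cmod (Csub (rho' (G i)) (rho (G i)))).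
    - apply Rabs_Re_le_Cmod.
    - apply (Rabs_Im_le_Cmod (Csub (rho' (G i)) (rho (G i)))).
    - apply Rabs_Im_le_Cmod. }
  exists (grid t (Z.to_nat (up (M / t))) cs); split; [split |].
  - intros U HU; eapply grid_open; eauto.
  - intros rho Hr; eapply grid_covers; eauto.
  - intros U HU rho rho' Ur Ur' i Hi.
    assert (Hin : forall x, In x ((fun rho : arith -> C => Re (rho (G i))) ::
                                  (fun rho : arith -> C => Im (rho (G i))) :: nil) -> In x cs)
      by (intros x Hx; apply in_flat_map; exists i; split; auto; apply in_seq; lia).
    pose proof (grid_fine t _ cs U HU rho rho' Ur Ur' _ (Hin _ (or_introl eq_refl))) as F1.
    pose proof (grid_fine t _ cs U HU rho rho' Ur Ur' _ (Hin _ (or_intror (or_introl eq_refl)))) as F2.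
    eapply Rle_lt_trans; [apply Cmod_le_Rabs_Re_Im | simpl in *; lra].
Qed.

(** * Perturbation of the generators *)

Lemma is_AE_approx A a eps : is_AE A (ERfin a) -> eps > 0 ->
  exists Us h, open_cover A Us /\ cover_entropy A Us h /\ a - eps < h.
Proof.
  intros [_ Hsup] He; apply NNPP; intros Hn.
  enough (a <= a - eps) by lra.
  apply (Hsup (a - eps)); intros Us h Ho Hc; apply Rnot_lt_le; intros Hl; apply Hn; eauto.
Qed.

Lemma INR_ratio_cv K : Un_cv (fun n => INR (S (n + K)) / INR (S n)) 1.
Proof.
  intros eps He; destruct (inv_INR_S_lt (eps / (INR K + 1))) as [N HN].
  { apply Rdiv_lt_0_compat; auto; pose proof (pos_INR K); lra. }
  exists N; intros n Hn; unfold R_dist; pose proof (pos_INR K).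
  assert (HS0 : 0 < INR (S n)) by (apply lt_0_INR; lia).
  assert (HS : 0 < / INR (S n)) by (apply Rinv_0_lt_compat; lra).
  replace (INR (S (n + K)) / INR (S n) - 1) with (INR K * / INR (S n))
    by (rewrite <- Nat.add_succ_l, plus_INR; field; lra).
  rewrite Rabs_right by (apply Rle_ge, Rmult_le_pos; lra).
  specialize (HN n Hn).
  apply Rle_lt_trans with ((INR K + 1) * / INR (S n)); [nra |].
  replace eps with ((INR K + 1) * (eps / (INR K + 1))) by (field; lra).
  apply Rmult_lt_compat_l; lra.
Qed.

Lemma entropy_le_of_covnum_le (NF NG : nat -> nat) K hF hG :
  (forall n, (1 <= NF n)%nat) -> (forall n, (NF n <= NG (n + K))%nat) ->
  Un_cv (fun n => ln (INR (NF (S n))) / INR (S n)) hF ->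
  Un_cv (fun n => ln (INR (NG (S n))) / INR (S n)) hG -> hF <= hG.
Proof.
  intros HNF1 HNFG HcvF HcvG.
  (* ln N_G(n + 1 + K) / (n + 1) = [ln N_G(n + 1 + K) / (n + 1 + K)] [(n + 1 + K) / (n + 1)] *)
  apply Rle_cv_lim with (Un := fun n => ln (INR (NF (S n))) / INR (S n))
    (Vn := fun n => (ln (INR (NG (S (n + K)))) / INR (S (n + K))) * (INR (S (n + K)) / INR (S n)));
    auto.
  - intros n.
    replace (ln (INR (NG (S (n + K)))) / INR (S (n + K)) * (INR (S (n + K)) / INR (S n)))
      with (ln (INR (NG (S (n + K)))) / INR (S n)) by (field; split; apply not_0_INR; lia).
    apply Rmult_le_compat_r; [left; apply Rinv_0_lt_compat, lt_0_INR; lia |].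
    apply ln_le; [apply lt_0_INR; specialize (HNF1 (S n)); lia |].
    apply le_INR; rewrite <- Nat.add_succ_l; apply HNFG.
  - replace hG with (hG * 1) by ring; apply CV_mult; [| apply INR_ratio_cv].
    exact (CV_shift' (fun n => ln (INR (NG (S n))) / INR (S n)) K hG HcvG).
Qed.

Lemma nth_In_of_holds (L : list ((arith -> C) -> Prop)) idx rho :
  nth idx L (fun _ => False) rho -> In (nth idx L (fun _ => False)) L.
Proof.
  intros H; destruct (lt_dec idx (length L)); [apply nth_In; auto |].
  rewrite nth_overflow in H by lia; contradiction.
Qed.

Section Transfer.
Variables F G : nat -> arith.
Hypothesis HF : forall i, linf_bounded (F i).
Variables (c s : R) (K : nat).
Hypothesis HFG : forall i n, Cmod (Csub (G i n) (F i n)) <= c.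
Hypothesis Hcs : c < s / 4.
Variables V Us : list ((arith -> C) -> Prop).
Hypothesis Hleb : forall rho, is_char (gen_anqie F) rho -> exists idx, forall rho',
  is_char (gen_anqie F) rho' -> chars_close F rho rho' K s -> nth idx V (fun _ => False) rho'.
Hypothesis Hfine : forall U, In U Us -> forall rho rho', U rho -> U rho' ->
  forall i, (i <= K)%nat -> Cmod (Csub (rho (G i)) (rho' (G i))) < s / 4.

Lemma word_set_ev_close W w p m : word_set Us W w (ev p) -> word_set Us W w (ev m) ->
  forall J i, (J < W)%nat -> (i <= K)%nat ->
    Cmod (Csub (F i (J + p)%nat) (F i (J + m)%nat)) < 3 * s / 4.
Proof.
  intros Hp Hm J i HJ Hi; specialize (Hp J HJ); specialize (Hm J HJ).
  pose proof (Hfine _ (nth_In_of_holds _ _ _ Hp) _ _ Hp Hm i Hi) as Hg.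
  rewrite !Amap_iter_ev in Hg; unfold ev in Hg.
  pose proof (HFG i (J + p)%nat); pose proof (HFG i (J + m)%nat).
  pose proof (Cmod_sub_triangle (F i (J + p)%nat) (G i (J + p)%nat) (F i (J + m)%nat)).
  pose proof (Cmod_sub_triangle (G i (J + p)%nat) (G i (J + m)%nat) (F i (J + m)%nat)).
  rewrite (Cmod_Csub_sym (F i (J + p)%nat) (G i (J + p)%nat)) in *; lra.
Qed.

Lemma covers_with_transfer n k :
  covers_with (gen_anqie G) Us (n + K) k -> covers_with (gen_anqie F) V n k.
Proof.
  intros [ws [Hlen Hws]]; set (W := (n + K)%nat) in *.
  assert (Hs : 0 < s) by (pose proof (HFG 0%nat 0%nat); pose proof (Cmod_ge0 (Csub (G 0%nat 0%nat) (F 0%nat 0%nat))); lra).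
  set (A := gen_anqie F); assert (HA : is_anqie A) by (apply gen_anqie_is_anqie; auto).
  (* each word w gets an evaluation point m w in its word set, whose orbit picks the V-word *)
  set (mw := fun w => epsilon (inhabits 0%nat) (fun m => word_set Us W w (ev m))).
  set (Good := fun rho idx => forall rho', is_char A rho' ->
          chars_close F rho rho' K s -> nth idx V (fun _ => False) rho').
  set (idxV := fun rho => epsilon (inhabits 0%nat) (Good rho)).
  assert (HidxV : forall rho, is_char A rho -> Good rho (idxV rho))
    by (intros rho Hr; exact (epsilon_spec (inhabits 0%nat) (Good rho) (Hleb rho Hr))).
  set (fw := fun w => map (fun j => idxV (ev (j + mw w)%nat)) (seq 0 n)).
  exists (map fw ws).
  split; [rewrite length_map; auto |]; intros rho Hr.
  set (l := flat_map (fun i => map (fun j => shiftn j (F i)) (seq 0 W)) (seq 0 (S K))).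
  destruct (ev_dense HA Hr l (s / 8)) as [p Hp]; [| lra |].
  { intros f Hf; apply in_flat_map in Hf; destruct Hf as [i [_ Hf]].
    apply in_map_iff in Hf; destruct Hf as [j [<- _]]; anqie_closure HA; apply gen_anqie_gen. }
  destruct (Hws (ev p) (ev_char _ p)) as [w [Hw Hwp]].
  assert (Hwm : word_set Us W w (ev (mw w)))
    by (apply (epsilon_spec (inhabits 0%nat) (fun m => word_set Us W w (ev m))); eauto).
  exists (fw w); split; [apply in_map; auto |].
  intros j Hj; unfold fw; rewrite nth_map_seq by auto.
  apply HidxV; [apply ev_char | apply char_Amap_iter; auto |].
  intros i j' Hi Hj'; unfold Amap_iter, ev; rewrite shiftn_add, shiftn_apply.
  assert (Hin : In (shiftn (j + j') (F i)) l).
  { apply in_flat_map; exists i; split; [apply in_seq; lia |].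
    apply (in_map (fun j0 => shiftn j0 (F i))), in_seq; unfold W; lia. }
  specialize (Hp _ Hin); rewrite shiftn_apply in Hp.
  pose proof (word_set_ev_close W w p (mw w) Hwp Hwm (j + j') i ltac:(unfold W; lia) Hi).
  replace (j' + (j + mw w))%nat with (j + j' + mw w)%nat by lia.
  pose proof (Cmod_sub_triangle (F i (j + j' + mw w)%nat) (F i (j + j' + p)%nat)
                (rho (shiftn (j + j') (F i)))).
  rewrite (Cmod_Csub_sym (F i (j + j' + mw w)%nat) (F i (j + j' + p)%nat)) in *; lra.
Qed.

End Transfer.

Theorem theorem1p4 :
  forall (F : nat -> arith),
    (forall i, linf_bounded (F i)) ->
    forall a : R, is_AE (gen_anqie F) (ERfin a) ->
    forall eps : R, eps > 0 ->
    exists delta : R, delta > 0 /\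
      forall G : nat -> arith,
        (forall i, linf_bounded (G i)) ->
        (exists c : R, c < delta /\ forall i n, Cmod (Csub (G i n) (F i n)) <= c) ->
        forall e : ER, is_AE (gen_anqie G) e ->
        ER_lt (ERfin (a - eps)) e.
Proof.
  intros F HF a HAE eps Heps.
  destruct (is_AE_approx _ a (eps / 2) HAE) as [V [hV [HVo [HVe HVa]]]]; [lra |].
  destruct (lebesgue_number F HF V HVo) as [K [s [Hs Hleb]]].
  exists (s / 4); split; [lra |]; intros G HG [c [Hc HFG]] [e |] HeAE; simpl; auto.
  destruct (gen_anqie_fine_cover G HG K (s / 16)) as [Us [HUo Hfine]]; [lra |].
  destruct (cover_entropy_exists (gen_anqie_is_anqie G HG) HUo) as [hG HhG].
  pose proof (proj1 HeAE Us hG HUo HhG); simpl in *.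
  enough (hV <= hG) by lra.
  destruct HVe as [NF [HNF HcvF]], HhG as [NG [HNG HcvG]].
  apply (entropy_le_of_covnum_le NF NG K); auto.
  - intros n; apply (covers_with_pos (gen_anqie F) V n), HNF.
  - intros n; apply (HNF n), (covers_with_transfer F G HF c s K HFG Hc V Us Hleb);
      [intros; replace (s / 4) with (4 * (s / 16)) by field; eapply Hfine; eauto | apply HNG].
Qed.
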